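(* Let $n\ge2$ and $a,b$ be positive integers, $h(j)=aj^n+b$ for $j\ge0$, $h(j)=0$ for $j<0$, $\alpha=a/b$ and $c(h)=\lfloor\alpha\rfloor+1$. Then $\operatorname{hdepth}(h)\le \operatorname{eq}(h)$. Moreover, if $c(h)\le 4$, then $\operatorname{hdepth}(h)=\operatorname{eq}(h)$.
   Context: For a nonzero function $h:\mathbb Z\to\mathbb Z_{\ge 0}$ with $h(j)=0$ for all sufficiently negative $j$, and integers $k\le d$, set $\beta_k^d(h)=\sum_{j\le k}(-1)^{k-j}\binom{d-j}{k-j}h(j)$, and $\operatorname{hdepth}(h)=\max\{d\in\mathbb Z:\ \beta_k^d(h)\ge 0\text{ for all integers }k\le d\}$. For $1\le i\le 2^n-1$ put $m=2^n+1-i$ and $\lambda_i=\dfrac{m^2+m(2^{n+1}-3)+2^{2n}-3\cdot2^n+4}{2m-2}$ (so $\lambda_1<\lambda_2<\dots<\lambda_{2^n-1}$). Define $$\operatorname{eq}(h)=\begin{cases}c(h),&\alpha\in(0,2^{n+1}-1),\\ 2^{n+1},&\alpha\in[2^{n+1}-1,\lambda_1],\\ 2^{n+1}+1-i,&\alpha\in(\lambda_{i-1},\lambda_i]\ \text{ for } 2\le i\le 2^n-1,\\ 2^n+1,&\alpha\in(\lambda_{2^n-1},\infty).\end{cases}$$ *)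

From mathcomp Require Import all_boot all_order all_algebra.
Set Implicit Arguments. Unset Strict Implicit. Unset Printing Implicit Defensive.
Import Order.TTheory GRing.Theory Num.Theory.
Local Open Scope ring_scope.

(* beta_k^d(h) = sum_{j <= k} (-1)^(k-j) C(d-j, k-j) h(j), for functions h
   vanishing on negative integers (so the sum runs over 0 <= j <= k; it is
   empty, i.e. 0, when k < 0).  Only meaningful for k <= d. *)
Definition beta (h : int -> int) (d k : int) : int :=
  if (0 <= k) then
    \sum_(i < `|(k + 1)%R|%N)
      (-1) ^+ `|(k - i%:Z)%R|%N * ('C(`|(d - i%:Z)%R|%N, `|(k - i%:Z)%R|%N))%:Z * h i%:Z
  else 0.

Definition hdepth_ok (h : int -> int) (d : int) : Prop :=
  forall k : int, k <= d -> 0 <= beta h d k.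

Definition is_hdepth (h : int -> int) (e : int) : Prop :=
  hdepth_ok h e /\ (forall d, hdepth_ok h d -> d <= e).

Definition hpoly (n a b : nat) (j : int) : int :=
  if 0 <= j then a%:Z * j ^+ n + b%:Z else 0.

Definition alpha (a b : nat) : rat := a%:R / b%:R.

Definition ch (a b : nat) : int := (a %/ b)%:Z + 1.

Definition lambda (n i : nat) : rat :=
  let m : rat := (2 ^ n + 1 - i)%N%:R in
  (m ^+ 2 + m * ((2 ^ n.+1)%N%:R - 3) + (2 ^ (2 * n))%N%:R
     - 3 * (2 ^ n)%N%:R + 4) / (2 * m - 2).

(* eq(h), following the case definition literally; in the third case i is
   the (first) index 2 <= i <= 2^n - 1 with lambda_{i-1} < alpha <= lambda_i. *)
Definition eqh (n a b : nat) : int :=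
  let al := alpha a b in
  if (0 < al) && (al < (2 ^ n.+1 - 1)%N%:R) then ch a b
  else if ((2 ^ n.+1 - 1)%N%:R <= al) && (al <= lambda n 1) then (2 ^ n.+1)%N%:Z
  else if lambda n (2 ^ n - 1) < al then (2 ^ n + 1)%N%:Z
  else
    let s := [seq i <- iota 2 (2 ^ n - 2)
               | (lambda n i.-1 < al) && (al <= lambda n i)] in
    (2 ^ n.+1 + 1)%N%:Z - (head 0%N s)%:Z.

(* Admissibility of d passes to d - 1: Pascal's rule for C(d - j, k - j) gives
   beta_k^d = beta_k^(d+1) + beta_(k-1)^d.  Hence hdepth(h) < D as soon as one
   beta_k^D is negative.  For h(j) = a j^n + b one has beta_1^D = a - (D - 1) b,
   negative for D = c(h) + 1, and 2 beta_2^(2^n + m) = L(m) b - (2m - 2) a, where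
   L(m)/(2m - 2) is lambda_i for m = 2^n + 1 - i; so beta_2 is negative at
   D = 2^(n+1) + 1 - i exactly when alpha > lambda_i.  These two facts bound the
   depth in every case of eq(h).  When c(h) <= 4 we have eq(h) = c(h), and the
   finitely many beta_k^(c(h)) are checked to be nonnegative. *)

From mathcomp Require Import all_boot all_order all_algebra.
From mathcomp Require Import zify ring.
Set Implicit Arguments. Unset Strict Implicit. Unset Printing Implicit Defensive.
Import Order.TTheory GRing.Theory Num.Theory.
Local Open Scope ring_scope.

Section Admissibility.
Variable h : int -> int.

Definition betan (D K : nat) : int :=
  \sum_(i < K.+1) (-1) ^+ (K - i)%N * ('C(D - i, K - i))%:Z * h i%:Z.

Lemma beta_nat (D K : nat) : (K <= D)%N -> beta h D%:Z K%:Z = betan D K.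
Proof.
move=> KD; rewrite /beta /betan (_ : (0 <= K%:Z) = true) //.
have -> : absz (K%:Z + 1)%R = K.+1 by rewrite -[1]/(1%N%:Z) -PoszD addn1.
apply: eq_bigr => i _.
have iK : (i <= K)%N by rewrite -ltnS ltn_ord.
by rewrite !distnEl // (leq_trans iK KD).
Qed.

Lemma betan_pascal (D K : nat) : (K < D)%N ->
  betan D K.+1 = betan D.+1 K.+1 + betan D K.
Proof.
move=> KD; rewrite /betan big_ord_recr [in X in _ = X + _]big_ord_recr /=.
rewrite !subnn !bin0 addrAC; congr (_ + _).
rewrite -big_split /=; apply: eq_bigr => i _.
have iK : (i <= K)%N by rewrite -ltnS ltn_ord.
rewrite !subSn //; last exact: leq_trans iK (ltnW KD).
rewrite binS PoszD exprS !mulN1r mulrDr mulrDl mulNr.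
by rewrite -[RHS]addrA !mulNr addNr addr0.
Qed.

Lemma betan_ge0_pred (D : nat) :
  (forall K, (K <= D.+1)%N -> 0 <= betan D.+1 K) ->
  forall K, (K <= D)%N -> 0 <= betan D K.
Proof.
move=> ge0; elim=> [|K IH] KD.
  by have := ge0 0%N isT; rewrite /betan !big_ord1 /= !subn0 !bin0.
by rewrite betan_pascal // addr_ge0 ?ge0 ?IH // ltnW.
Qed.

Lemma hdepth_ok_pred d : hdepth_ok h d -> hdepth_ok h (d - 1).
Proof.
move=> ok [K|K] Kd; last by rewrite /beta.
have [D dE] : exists D : nat, d = D.+1%:Z.
  by exists `|d - 1|%N; move: Kd; lia.
move: ok Kd; rewrite dE (_ : D.+1%:Z - 1 = D%:Z); last by lia.
move=> ok; rewrite lez_nat => KD; rewrite beta_nat //.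
apply: betan_ge0_pred KD => K' K'D.
by rewrite -beta_nat // ok // lez_nat.
Qed.

Lemma hdepth_ok_le d d' : d' <= d -> hdepth_ok h d -> hdepth_ok h d'.
Proof.
move=> d'd; have [m ->] : exists m : nat, d' = d - m%:Z.
  by exists `|d - d'|%N; lia.
elim: m => [|m IH] ok; first by rewrite subr0.
have -> : d - m.+1%:Z = (d - m%:Z) - 1 by lia.
exact/hdepth_ok_pred/IH.
Qed.

Lemma hdepth_lt_of_beta_lt0 (D K : nat) d : (K <= D)%N ->
  beta h D%:Z K%:Z < 0 -> hdepth_ok h d -> d < D%:Z.
Proof.
move=> KD neg ok; rewrite ltNge; apply/negP => Dd.
have := hdepth_ok_le Dd ok (k := K%:Z); rewrite lez_nat => /(_ KD).
by rewrite leNgt neg.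
Qed.

Lemma beta1E (D : nat) : (0 < D)%N -> beta h D%:Z 1 = h 1 - D%:Z * h 0.
Proof.
move=> D0; rewrite (@beta_nat D 1) // /betan !big_ord_recr big_ord0 /=.
rewrite !subn0 subnn !bin0 bin1 expr1 expr0; ring.
Qed.

Lemma beta2E (D : nat) : (1 < D)%N ->
  beta h D%:Z 2 = h 2 - D.-1%:Z * h 1 + 'C(D, 2)%:Z * h 0.
Proof.
move=> D1; rewrite (@beta_nat D 2) // /betan !big_ord_recr big_ord0 /=.
by rewrite !subn0 subnn !bin0 bin1 expr0 expr1 sqrrN expr1n subn1; ring.
Qed.

End Admissibility.

Definition lambda_num (N M : nat) : int :=
  M%:Z * M%:Z + M%:Z * (2 * N%:Z - 3) + N%:Z * N%:Z - 3 * N%:Z + 4.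

Lemma lambdaE n i : lambda n i =
  (lambda_num (2 ^ n) (2 ^ n + 1 - i))%:~R / (2 * (2 ^ n + 1 - i)%N%:Z - 2)%:~R.
Proof.
have sq : (2 ^ (2 * n) = 2 ^ n * 2 ^ n)%N by rewrite mul2n -addnn expnD.
rewrite /lambda /lambda_num expnS sq.
set N := (2 ^ n)%N; set M := (N + 1 - i)%N.
by rewrite !natrM; congr (_ / _); ring.
Qed.

Lemma double_exp2_le_exp3 n : (2 <= n)%N -> (2 * 2 ^ n <= 3 ^ n)%N.
Proof.
elim: n => [|n IH] //; case: n IH => [|[|n]] // IH _.
by rewrite !(expnS _ n.+2); move: IH => /(_ isT); lia.
Qed.

Section Hpoly.
Variables n a b : nat.
Hypotheses (hn : (2 <= n)%N) (ha : (0 < a)%N) (hb : (0 < b)%N).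
Local Notation h := (hpoly n a b).
Local Notation N := (2 ^ n)%N.

Let n_gt0 : (0 < n)%N. Proof. exact: leq_trans hn. Qed.
Let N_ge4 : (4 <= N)%N. Proof. by rewrite -[4%N]/(2 ^ 2)%N leq_exp2l. Qed.

Lemma hpoly_nat (i : nat) : h i%:Z = (a * i ^ n + b)%N%:Z.
Proof.
rewrite /hpoly (_ : (0 <= i%:Z) = true) // PoszD PoszM; congr (_ + _).
by congr (_ * _); rewrite -!natz natrX.
Qed.

Lemma beta1_hpoly (D : nat) : (0 < D)%N -> beta h D%:Z 1 = a%:Z - (D%:Z - 1) * b%:Z.
Proof.
move=> D0; rewrite beta1E // !hpoly_nat exp1n exp0n // muln1 muln0 add0n.
by rewrite PoszD; ring.
Qed.

Lemma beta2_hpoly (m : nat) : (0 < m)%N ->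
  2 * beta h (N + m)%N%:Z 2 = lambda_num N m * b%:Z - (2 * m%:Z - 2) * a%:Z.
Proof.
move=> m0; rewrite beta2E; last by lia.
rewrite !hpoly_nat exp1n exp0n // muln1 muln0 add0n.
have C2 : (2 * 'C(N + m, 2) = (N + m) * (N + m).-1)%N.
  by rewrite (mul_bin_left _ 1) bin1 mulnC subn1.
rewrite (_ : (1 + 1)%N = 2%N) // /lambda_num; move: C2; nia.
Qed.

Lemma hdepth_le_ch d : hdepth_ok h d -> d <= ch a b.
Proof.
move=> ok; suff : d < (a %/ b).+2%:Z by rewrite /ch; lia.
apply: (hdepth_lt_of_beta_lt0 (K := 1)) ok => //.
by rewrite beta1_hpoly //; have := ltn_ceil a hb; lia.
Qed.

Lemma hdepth_lt_of_lambda_num (m : nat) d : (0 < m)%N ->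
  lambda_num N m * b%:Z < (2 * m%:Z - 2) * a%:Z -> hdepth_ok h d -> d < (N + m)%N%:Z.
Proof.
move=> m0 lt ok; apply: (hdepth_lt_of_beta_lt0 (K := 2)) ok; first lia.
(* [K%:Z] with [K := 2] is not syntactically the numeral [2] *)
change (beta h (N + m)%N%:Z 2 < 0); have := beta2_hpoly m0; lia.
Qed.

Lemma lambda_lt_alphaE i : (i < N)%N ->
  (lambda n i < alpha a b) =
  (lambda_num N (N + 1 - i) * b%:Z < (2 * (N + 1 - i)%N%:Z - 2) * a%:Z).
Proof.
move=> iN; rewrite lambdaE /alpha ltr_pdivrMr ?ltr0z; last by lia.
rewrite mulrAC ltr_pdivlMr ?ltr0n //.
by rewrite [_ * a%:Z]mulrC -[a%:R]/(a%:Z)%:~R -[b%:R]/(b%:Z)%:~R -!intrM ltr_int.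
Qed.

Lemma hdepth_le_of_lambda_lt i d : (i < N)%N ->
  lambda n i < alpha a b -> hdepth_ok h d -> d <= (2 * N - i)%N%:Z.
Proof.
move=> iN; rewrite lambda_lt_alphaE // => lt ok.
by have := hdepth_lt_of_lambda_num (m := N + 1 - i) _ lt ok; lia.
Qed.

Lemma hdepth_le_2N d : hdepth_ok h d -> d <= (2 * N)%N%:Z.
Proof.
move=> ok; have [lt|ge] := ltnP a (2 * N * b).
  suff : d < (2 * N).+1%:Z by lia.
  apply: (hdepth_lt_of_beta_lt0 (K := 1)) ok => //.
  by rewrite beta1_hpoly //; lia.
suff : d < (N + N.+1)%N%:Z by lia.
apply: hdepth_lt_of_lambda_num ok => //.
rewrite /lambda_num; nia.
Qed.

Lemma hdepth_le_eqh d : hdepth_ok h d -> d <= eqh n a b.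
Proof.
move=> ok; have le2N := hdepth_le_2N ok; rewrite /eqh expnS.
case: ifP => _; first exact: hdepth_le_ch.
case: ifP => _; first by [].
case: ifP => [lt|_].
  by have := hdepth_le_of_lambda_lt (i := N - 1) _ lt ok; lia.
set s := [seq i <- _ | _]; case E: s => [|i s'] /=; first lia.
have : i \in s by rewrite E mem_head.
rewrite mem_filter mem_iota => /andP[/andP[lt _] range].
by have := hdepth_le_of_lambda_lt (i := i.-1) _ lt ok; lia.
Qed.

Lemma eqh_ch : ch a b <= 4 -> eqh n a b = ch a b.
Proof.
move=> c4; rewrite /eqh ifT //.
rewrite /alpha divr_gt0 ?ltr0n // ltr_pdivrMr ?ltr0n // -natrM ltr_nat.
have N8 : (8 <= 2 ^ n.+1)%N by rewrite expnS; lia.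
by move: c4; rewrite /ch; have := ltn_ceil a hb; nia.
Qed.

(* Only the growth facts 4 <= 2^n, 2 2^n <= 3^n <= 4^n of the values of h are
   needed to check the finitely many beta_k^c(h) with c <= 4. *)
Lemma hdepth_ok_ch : ch a b <= 4 -> hdepth_ok h (ch a b).
Proof.
move=> c4 [K|K] Kc; last by rewrite /beta.
have F1 : (4 * a <= a * 2 ^ n)%N by rewrite mulnC leq_mul2l N_ge4 orbT.
have F2 : (2 * (a * 2 ^ n) <= a * 3 ^ n)%N.
  by rewrite mulnCA leq_mul2l double_exp2_le_exp3 // orbT.
have F3 : (a * 3 ^ n <= a * 4 ^ n)%N by rewrite leq_mul2l leq_exp2r // orbT.
have qb := divn_eq a b; have qb2 := ltn_pmod a hb.
move: c4 Kc; rewrite /ch; move: (a %/ b)%N qb => q qb c4.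
rewrite (_ : q%:Z + 1 = q.+1%:Z) ?lez_nat => [KD|]; last lia.
rewrite beta_nat //.
have q3 : (q <= 3)%N by lia.
case: q q3 qb c4 KD => [|[|[|[|q]]]] // _ qb _;
  case: K => [|[|[|[|[|K]]]]] // _;
  rewrite /betan !big_ord_recr big_ord0 /= !hpoly_nat exp0n // exp1n muln1 muln0 ?add0n;
  rewrite ?subSS ?subn0 ?binS ?bin0 ?bin0n ?subnn ?expr0 ?exprS ?expr0; lia.
Qed.

End Hpoly.

Theorem theorem3p9 (n a b : nat) (hn : (2 <= n)%N) (ha : (0 < a)%N) (hb : (0 < b)%N) :
  (forall d : int, hdepth_ok (hpoly n a b) d -> d <= eqh n a b) /\
  (ch a b <= 4 -> is_hdepth (hpoly n a b) (eqh n a b)).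
Proof.
split=> [d|c4]; first exact: hdepth_le_eqh.
rewrite eqh_ch //; split; first exact: hdepth_ok_ch.
exact: hdepth_le_ch.
Qed.
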